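(* Let $n\geq 3$ and $m\in\{1,\ldots,n\}$ be integers. Then the community code $C_{n,m}\subseteq\mathbb{F}_2^{N}$, $N=\binom{n}{2}$, is not a linear code (i.e., it is not an $\mathbb{F}_2$-linear subspace of $\mathbb{F}_2^N$).
   Context: For integers $n\geq 2$, $N=\binom{n}{2}$ and $1\leq m\leq n$, the community code $C_{n,m}\subseteq\mathbb{F}_2^N$ consists of exactly those binary vectors of length $N$ that are the upper-triangular (off-diagonal) part of the adjacency matrix of a simple undirected graph on the labeled vertex set $\{1,\ldots,n\}$ which is a disjoint union of cliques, each clique having at least $m$ vertices. (Equivalently, codewords correspond to partitions of $\{1,\ldots,n\}$ into parts of size at least $m$, where two vertices are adjacent iff they lie in the same part.) *)

From HB Require Import structures.
From mathcomp Require Import all_boot all_order all_algebra.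
Set Implicit Arguments. Unset Strict Implicit. Unset Printing Implicit Defensive.
Import GRing.Theory.
Local Open Scope ring_scope.

(* Coordinates of F_2^N, N = 'C(n,2): unordered pairs {i,j} of vertices of
   {0..n-1}, represented as ordered pairs (i,j) with i < j. *)
Definition vpair (n : nat) := {p : 'I_n * 'I_n | (p.1 < p.2)%N}.

Notation F2vec n := {ffun vpair n -> ('F_2)^o}.

(* The codeword (upper-triangular part of the adjacency matrix) of the
   disjoint union of cliques given by a partition P of the vertex set. *)
Definition part_word (n : nat) (P : {set {set 'I_n}}) : F2vec n :=
  [ffun p : vpair n =>
     ([exists B in P, ((val p).1 \in B) && ((val p).2 \in B)] : bool)%:R].

Definition community_code (n m : nat) : F2vec n -> Prop :=
  fun x => exists P : {set {set 'I_n}},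
    [/\ partition P [set: 'I_n], (forall B, B \in P -> (m <= #|B|)%N)
      & x = part_word P].

Definition is_linear_code (R : pzRingType) (V : lmodType R) (C : V -> Prop) : Prop :=
  C 0 /\ forall (a : R) (x y : V), C x -> C y -> C (a *: x + y).

(* A linear code contains the zero word, which is the word of the partition
   into singletons; so the code is not linear when m > 1.  When m <= 1 every
   partition is admissible, and a codeword, read as a relation on vertices,
   is transitive.  The sum of the words of the one-block partition and of the
   partition {0,1} | {2,...,n-1} contains the edges 02 and 12 but not 01, so
   it is not a codeword. *)

From mathcomp Require Import all_boot all_order all_algebra.
Set Implicit Arguments. Unset Strict Implicit. Unset Printing Implicit Defensive.
Import GRing.Theory.
Local Open Scope ring_scope.

Lemma natr_bool_F2_inj : injective (fun b : bool => b%:R : 'F_2).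
Proof. by do 2!case. Qed.

Lemma linear_code_add (R : pzRingType) (V : lmodType R) (C : V -> Prop) x y :
  is_linear_code C -> C x -> C y -> C (x + y).
Proof. by move=> [_ C_lin] Cx Cy; rewrite -[x]scale1r; apply: C_lin. Qed.

Section PartitionWords.

Variable n : nat.
Implicit Types (P : {set {set 'I_n}}) (i j k : 'I_n).

Lemma part_word_pblock P i j (lt_ij : (i < j)%N) :
  partition P [set: 'I_n] ->
  part_word P (exist _ (i, j) lt_ij) = (j \in pblock P i)%:R.
Proof.
case/and3P=> /eqP coverP tiP _; rewrite ffunE /=; congr (nat_of_bool _)%:R.
have Pi : i \in cover P by rewrite coverP inE.
apply/existsP/idP => [[B /and3P[PB iB jB]] | j_Pi].
  by rewrite (def_pblock tiP PB iB).
by exists (pblock P i); rewrite pblock_mem // mem_pblock Pi j_Pi.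
Qed.

Lemma part_word_preim (T : eqType) (f : 'I_n -> T) i j (lt_ij : (i < j)%N) :
  part_word (preim_partition f [set: 'I_n]) (exist _ (i, j) lt_ij) =
  (f i == f j)%:R.
Proof.
rewrite part_word_pblock ?preim_partitionP //.
by rewrite pblock_equivalence_partition ?inE //; split=> // /eqP->.
Qed.

Lemma community_code_leq1 m P :
  (m <= 1)%N -> partition P [set: 'I_n] -> community_code m (part_word P).
Proof.
move=> m_le1 partP; exists P; split=> // B PB; apply: leq_trans m_le1 _.
by rewrite card_gt0; apply: contraTneq PB => ->; rewrite (partition0 partP).
Qed.

Lemma community_code_trans m x i j k
    (lt_ij : (i < j)%N) (lt_ik : (i < k)%N) (lt_jk : (j < k)%N) :
  community_code m x ->
  x (exist _ (i, k) lt_ik) = 1 -> x (exist _ (j, k) lt_jk) = 1 ->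
  x (exist _ (i, j) lt_ij) = 1.
Proof.
case=> P [partP _ ->]; rewrite !part_word_pblock //.
move=> /(@natr_bool_F2_inj _ true) k_Pi /(@natr_bool_F2_inj _ true) k_Pj.
have [/eqP coverP tiP _] := and3P partP.
have eq_Pij : pblock P i = pblock P j.
  by rewrite -(same_pblock tiP k_Pi) (same_pblock tiP k_Pj).
by rewrite eq_Pij mem_pblock coverP inE.
Qed.

Lemma zero_notin_community_code m :
  (0 < n)%N -> (1 < m)%N -> ~ @community_code n m 0.
Proof.
move=> n_gt0 m_gt1 [P [partP P_big word0]].
have [/eqP coverP tiP _] := and3P partP.
pose i0 := Ordinal n_gt0.
have Pi0 : i0 \in cover P by rewrite coverP inE.
have : (1 < #|pblock P i0|)%N by apply: leq_trans m_gt1 (P_big _ (pblock_mem Pi0)).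
rewrite (cardsD1 i0) mem_pblock Pi0 ltnS card_gt0.
case/set0Pn=> j /setD1P[j_neq0 j_Pi0].
have lt_0j : (i0 < j)%N by rewrite ltn_neqAle leq0n andbT eq_sym.
have := congr1 (fun x : F2vec n => x (exist _ (i0, j) lt_0j)) word0.
by rewrite /= ffunE part_word_pblock // j_Pi0.
Qed.

End PartitionWords.

Theorem lemma2 (n m : nat) :
  (3 <= n)%N -> (1 <= m <= n)%N ->
  ~ is_linear_code (@community_code n m).
Proof.
move=> n_ge3 _ linC.
have [m_le1 | m_gt1] := leqP m 1; last first.
  by apply: zero_notin_community_code (ltnW (ltnW n_ge3)) m_gt1 _; case: linC.
pose i0 := Ordinal (ltnW (ltnW n_ge3)).
pose i1 := Ordinal (ltnW n_ge3).
pose i2 := Ordinal n_ge3.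
pose w1 := part_word (preim_partition (fun _ : 'I_n => tt) [set: 'I_n]).
pose w2 := part_word (preim_partition (fun i : 'I_n => (i <= 1)%N) [set: 'I_n]).
have Cw : community_code m (w1 + w2).
  apply: linear_code_add linC _ _;
  exact: community_code_leq1 (preim_partitionP _ _).
have wE p : (w1 + w2) p = w1 p + w2 p by rewrite ffunE.
have := @community_code_trans _ _ _ i0 i1 i2 isT isT isT Cw.
by rewrite !wE !part_word_preim /= !addr0 => /(_ erefl erefl)/eqP.
Qed.
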